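(* Let $\Gamma$ be a finite marked graph with vertex set $V(\Gamma)=V_1\sqcup V_2$, and let $\Gamma_1,\Gamma_2$ be the induced subgraphs on $V_1,V_2$. Assume $h_1(\Gamma)=h_1(\Gamma_1)+h_1(\Gamma_2)$, where $h_1$ denotes the rank of the first homology group of a graph (viewed as a $1$-dimensional complex). Then $$\det\Gamma=\det\Gamma_1\cdot\det\Gamma_2+\sum_{k\ge1}\ \sum_{\{(u_1,v_1),\dots,(u_k,v_k)\}}(-1)^k\det(\Gamma_1-u_1-\dots-u_k)\cdot\det(\Gamma_2-v_1-\dots-v_k),$$ where the inner sum runs over all sets of $k$ pairwise vertex-disjoint edges $(u_i,v_i)$ of $\Gamma$ with $u_i\in V_1$, $v_i\in V_2$.
   Context: A marked graph is a finite graph without loops (multiple edges allowed) in which each vertex $v$ carries a real number $n_v$ (its mark). Its determinant $\det\Gamma$ is the determinant of the $V\times V$ matrix $M$ with $M_{vv}=n_v$ and $M_{uv}=-(\text{number of edges between }u\text{ and }v)$ for $u\ne v$. The determinant of the empty graph is $1$. For vertices $u_1,\dots,u_k$, $\Gamma-u_1-\dots-u_k$ denotes the induced subgraph on the remaining vertices. *)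

From HB Require Import structures.
From mathcomp Require Import all_boot all_order all_algebra.
Set Implicit Arguments. Unset Strict Implicit. Unset Printing Implicit Defensive.
Import Order.TTheory GRing.Theory Num.Theory.
Local Open Scope ring_scope.

(* A finite multigraph: vertex type V, edge type E, each edge e has
   endpoints (ends e).1 and (ends e).2 (loops are excluded by a hypothesis
   of the theorem).  Parallel edges are distinct elements of E. *)

Definition nedges (V E : finType) (ends : E -> V * V) (u v : V) : nat :=
  #|[set e : E | (ends e == (u, v)) || (ends e == (v, u))]|.

Definition gmx (R : ringType) (V E : finType) (n : V -> R) (ends : E -> V * V)
    (S : {set V}) : 'M[R]_#|S| :=
  \matrix_(i, j)
    if i == j then n (enum_val i)
    else - (nedges ends (enum_val i) (enum_val j))%:R.

Definition gdet (R : comRingType) (V E : finType) (n : V -> R) (ends : E -> V * V)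
    (S : {set V}) : R := \det (gmx n ends S).

Definition induced_edges (V E : finType) (ends : E -> V * V) (S : {set V})
  : {set E} := [set e | ((ends e).1 \in S) && ((ends e).2 \in S)].

(* boundary map C_1 -> C_0 of the graph with edge set F (as a 1-complex),
   rows indexed by the edges of F, columns by vertices *)
Definition boundary_mx (V E : finType) (ends : E -> V * V) (F : {set E})
  : 'M[rat]_(#|F|, #|V|) :=
  \matrix_(i, j)
    ((enum_val j == (ends (enum_val i)).2)%:R
     - (enum_val j == (ends (enum_val i)).1)%:R).

(* h_1 = rank of H_1 = rank of the cycle space ker (boundary) *)
Definition h1 (V E : finType) (ends : E -> V * V) (F : {set E}) : nat :=
  \rank (kermx (boundary_mx ends F)).

Definition endpoints (V E : finType) (ends : E -> V * V) (F : {set E})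
  : {set V} := [set v | [exists e in F, (v == (ends e).1) || (v == (ends e).2)]].

Definition cross_matching (V E : finType) (ends : E -> V * V) (V1 : {set V})
    (F : {set E}) : bool :=
  [forall e in F,
     (((ends e).1 \in V1) && ((ends e).2 \notin V1))
     || (((ends e).2 \in V1) && ((ends e).1 \notin V1))]
  && [forall e in F, forall f in F, (e != f) ==>
        [&& (ends e).1 != (ends f).1, (ends e).1 != (ends f).2,
            (ends e).2 != (ends f).1 & (ends e).2 != (ends f).2]].

(* Expand det Γ over the permutations s of V: only those moving every vertex
   along an edge contribute.  The hypothesis on h_1 says that the cycle space of
   Γ is the direct sum of those of Γ_1 and Γ_2, so no cycle has a nonzero
   coefficient on an edge between V_1 and V_2.  Hence there is at most one edge
   between any u ∈ V_1 and v ∈ V_2, and a contributing s that moves a vertex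
   across must swap it with its image, since otherwise the closed walk along
   that cycle of s would give a cycle through a crossing edge.  The crossing
   edges swapped by s therefore form a cross matching F, and s = τ_F r where
   τ_F is the product of the transpositions of F and r permutes V_1 - ends F
   and V_2 - ends F separately; summing over r gives
   (-1)^|F| det(Γ_1 - ends F) det(Γ_2 - ends F). *)

From HB Require Import structures.
From mathcomp Require Import all_boot all_order all_algebra fingroup perm action.
Set Implicit Arguments. Unset Strict Implicit. Unset Printing Implicit Defensive.
Import Order.TTheory GRing.Theory Num.Theory.
Local Open Scope ring_scope.

Section ExtendPerm.
Variables (V : finType) (S : {set V}).

Lemma enum_val_ind (P : V -> Prop) :
  (forall i : 'I_#|S|, P (enum_val i)) -> (forall x, x \notin S -> P x) ->
  forall x, P x.
Proof.
move=> Pin Pout x; case: (boolP (x \in S)) => [xS|]; last exact: Pout.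
by rewrite -(enum_rankK_in xS xS).
Qed.

Definition extend_perm_fun (s : 'S_#|S|) (x : V) : V :=
  if [pick i : 'I_#|S| | enum_val i == x] is Some i then enum_val (s i) else x.

Lemma extend_perm_fun_enum_val s i : extend_perm_fun s (enum_val i) = enum_val (s i).
Proof.
rewrite /extend_perm_fun; case: pickP => [j /eqP /enum_val_inj -> //|].
by move=> /(_ i); rewrite eqxx.
Qed.

Lemma extend_perm_fun_out s x : x \notin S -> extend_perm_fun s x = x.
Proof.
rewrite /extend_perm_fun; case: pickP => [j /eqP <-|//].
by rewrite enum_valP.
Qed.

Lemma extend_perm_fun_inj s : injective (extend_perm_fun s).
Proof.
elim/enum_val_ind => [i|x xS]; elim/enum_val_ind => [j|y yS];
  rewrite ?extend_perm_fun_enum_val ?extend_perm_fun_out //.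
- by move/enum_val_inj/perm_inj->.
- by move=> ij; move: yS; rewrite -ij enum_valP.
- by move=> ji; move: xS; rewrite ji enum_valP.
Qed.

Definition extend_perm s : {perm V} := perm (@extend_perm_fun_inj s).

Lemma extend_perm_enum_val s i : extend_perm s (enum_val i) = enum_val (s i).
Proof. by rewrite permE extend_perm_fun_enum_val. Qed.

Lemma extend_perm_out s x : x \notin S -> extend_perm s x = x.
Proof. by move=> xS; rewrite permE extend_perm_fun_out. Qed.

Lemma extend_perm_inj : injective extend_perm.
Proof.
move=> s t st; apply/permP => i; apply: enum_val_inj.
by rewrite -!extend_perm_enum_val st.
Qed.

Lemma extend_permM : {morph extend_perm : s t / (s * t)%g}.
Proof.
move=> s t; apply/permP; elim/enum_val_ind => [i|x xS].
  by rewrite !(permM, extend_perm_enum_val).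
by rewrite permM !extend_perm_out.
Qed.

Lemma extend_perm1 : extend_perm 1%g = 1%g.
Proof.
by apply/permP; elim/enum_val_ind => [i|x xS];
  rewrite ?extend_perm_enum_val ?extend_perm_out // !perm1.
Qed.

Lemma extend_perm_tperm i j :
  extend_perm (tperm i j) = tperm (enum_val i) (enum_val j).
Proof.
apply/permP; elim/enum_val_ind => [k|x xS].
  by rewrite extend_perm_enum_val (inj_tperm _ _ _ enum_val_inj).
by rewrite extend_perm_out // tpermD // (contraNneq _ xS) // => <-; rewrite enum_valP.
Qed.

Lemma odd_extend_perm s : odd_perm (extend_perm s) = odd_perm s.
Proof.
case: (prod_tpermP s) => ts -> dts.
rewrite (big_morph extend_perm extend_permM extend_perm1).
under eq_bigr do rewrite extend_perm_tperm.
rewrite -(big_map (fun t => (enum_val t.1, enum_val t.2)) xpredT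
                  (fun t => tperm t.1 t.2)).
rewrite !odd_perm_prod ?size_map // all_map.
by apply: sub_all dts => t; rewrite /dpair /= (inj_eq enum_val_inj).
Qed.

Lemma perm_on_extend_perm s : perm_on S (extend_perm s).
Proof.
apply/subsetP => x; rewrite inE; apply: contraNT => xS.
by rewrite extend_perm_out.
Qed.

Lemma extend_perm_onto : [set extend_perm s | s in 'S_#|S|] = [set s | perm_on S s].
Proof.
apply/eqP; rewrite eqEcard; apply/andP; split.
  by apply/subsetP => _ /imsetP [s _ ->]; rewrite inE perm_on_extend_perm.
rewrite card_imset; last exact: extend_perm_inj.
rewrite (eq_card (B := perm_on S)) ?card_perm; last by move=> s; rewrite inE.
by rewrite card_Sn.
Qed.

Lemma big_perm_on (R : nmodType) (f : {perm V} -> R) :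
  \sum_(s | perm_on S s) f s = \sum_(s : 'S_#|S|) f (extend_perm s).
Proof.
rewrite -(big_imset _ (in2W extend_perm_inj)) /= extend_perm_onto.
by apply: eq_bigl => s; rewrite inE.
Qed.

End ExtendPerm.

Section PermExpansion.
Variables (R : comPzRingType) (V : finType) (m : V -> V -> R).

Definition det_on (S : {set V}) : R :=
  \sum_(s : {perm V} | perm_on S s) (-1) ^+ s * \prod_(x in S) m x (s x).

Lemma det_on_mx (S : {set V}) :
  \det (\matrix_(i, j) m (enum_val i) (enum_val j) : 'M_#|S|) = det_on S.
Proof.
rewrite /det_on big_perm_on; apply: eq_bigr => s _.
rewrite odd_extend_perm (big_enum_val (A := mem S)) /=; congr (_ * _).
by apply: eq_bigr => i _; rewrite extend_perm_enum_val mxE.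
Qed.

Variables (A B : {set V}).
Hypothesis dAB : [disjoint A & B].

Let inA_inB x : x \in A -> (x \in B) = false.
Proof. exact: disjointFr. Qed.

Let inB_inA x : x \in B -> (x \in A) = false.
Proof. exact: disjointFl. Qed.

Let mulpE (p q : {perm V}) : perm_on A p -> perm_on B q ->
  forall x, (p * q)%g x = if x \in A then p x else q x.
Proof.
move=> pA qB x; rewrite permM; case: ifP => xA.
  by rewrite (out_perm qB) // inA_inB // (perm_closed _ pA).
by rewrite (out_perm pA) ?xA.
Qed.

Let stabilizes_complement s : perm_on (A :|: B) s -> (s \in 'N(A | 'P))%g ->
  (s \in 'N(B | 'P))%g.
Proof.
move=> sAB /astabsP sA; apply/astabsP => x /=.
have {}sA y : (s y \in A) = (y \in A) by exact: sA.
case: (boolP (x \in A)) => xA; first by rewrite !inA_inB ?sA.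
case: (boolP (x \in B)) => xB.
  by move: (perm_closed x sAB); rewrite apermE !inE sA (negbTE xA) xB.
by rewrite apermE (out_perm sAB) ?(negbTE xB) // inE negb_or xA.
Qed.

Let mul_perm_on_disjointU p q : perm_on A p -> perm_on B q ->
  perm_on (A :|: B) (p * q)%g && ((p * q)%g \in 'N(A | 'P))%g.
Proof.
move=> pA qB; apply/andP; split.
  apply/subsetP => x; rewrite inE mulpE //; case: ifP => xA; rewrite inE ?xA //.
  by apply: contraNT => xB; rewrite (out_perm qB).
apply/astabsP => x /=; rewrite apermE mulpE //.
case: ifP => xA; first by rewrite (perm_closed _ pA) xA.
case: (boolP (x \in B)) => xB; last by rewrite (out_perm qB) ?xA.
have qxB : q x \in B by rewrite (perm_closed _ qB).
by apply: contraTF _ qxB => /inA_inB ->.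
Qed.

Let restr_perm_mul p q : perm_on A p -> perm_on B q ->
  restr_perm A (p * q)%g = p /\ restr_perm B (p * q)%g = q.
Proof.
move=> pA qB; have /andP [pqAB pqA] := mul_perm_on_disjointU pA qB.
have pqB := stabilizes_complement pqAB pqA.
split; apply/permP => x.
  case: (boolP (x \in A)) => xA; first by rewrite restr_permE // mulpE // xA.
  by rewrite !(out_perm (restr_perm_on _ _), out_perm pA).
case: (boolP (x \in B)) => xB; first by rewrite restr_permE // mulpE // inB_inA.
by rewrite !(out_perm (restr_perm_on _ _), out_perm qB).
Qed.

Let mul_restr_perm s : perm_on (A :|: B) s -> (s \in 'N(A | 'P))%g ->
  (restr_perm A s * restr_perm B s)%g = s.
Proof.
move=> sAB sA; have sB := stabilizes_complement sAB sA.
apply/permP => x; rewrite mulpE ?restr_perm_on //.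
case: ifP => xA; first by rewrite restr_permE.
case: (boolP (x \in B)) => xB; first by rewrite restr_permE.
by rewrite (out_perm sAB) ?(out_perm (restr_perm_on _ _)) // inE xA.
Qed.

Lemma det_on_disjointU :
  \sum_(s | perm_on (A :|: B) s && (s \in 'N(A | 'P))%g)
     (-1) ^+ s * \prod_(x in A :|: B) m x (s x) = det_on A * det_on B.
Proof.
rewrite /det_on big_distrl /=; under [RHS]eq_bigr do rewrite mulr_sumr.
rewrite pair_big_dep /=.
rewrite (reindex_onto (fun pq : {perm V} * {perm V} => (pq.1 * pq.2)%g)
           (fun s => (restr_perm A s, restr_perm B s))) /=; last first.
  by move=> s /andP [sAB sA]; rewrite mul_restr_perm.
apply: eq_big => [[p q]|[p q]] /=.
  apply/idP/idP => [/andP [_ /eqP [<- <-]]|/andP [pA qB]].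
    by rewrite !restr_perm_on.
  have [-> ->] := restr_perm_mul pA qB.
  by rewrite mul_perm_on_disjointU ?eqxx.
move=> /andP [_ /eqP [pE qE]].
have pA : perm_on A p by rewrite -pE restr_perm_on.
have qB : perm_on B q by rewrite -qE restr_perm_on.
rewrite (eq_bigl [predU A & B]) => [|x]; last by rewrite !inE.
rewrite odd_permM signr_addb bigU //= mulrACA; congr ((_ * _) * (_ * _)).
  by apply: eq_bigr => x xA; rewrite mulpE // xA.
by apply: eq_bigr => x xB; rewrite mulpE // inB_inA.
Qed.

End PermExpansion.

Definition graph_entry (R : pzRingType) (V E : finType) (n : V -> R)
    (ends : E -> V * V) (x y : V) : R :=
  if x == y then n x else - (nedges ends x y)%:R.

Lemma gdet_det_on (R : comNzRingType) (V E : finType) (n : V -> R)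
    (ends : E -> V * V) (S : {set V}) :
  gdet n ends S = det_on (graph_entry n ends) S.
Proof.
rewrite -det_on_mx /gdet; congr (\det _); apply/matrixP => i j.
by rewrite !mxE /graph_entry (inj_eq enum_val_inj).
Qed.

Section CycleSpace.
Variables (V E : finType) (ends : E -> V * V) (V1 : {set V}).

Definition incidence (e : E) (v : V) : rat :=
  (v == (ends e).2)%:R - (v == (ends e).1)%:R.

Definition crossing (e : E) : bool := ((ends e).1 \in V1) != ((ends e).2 \in V1).

Definition edge_incl_mx (F : {set E}) : 'M[rat]_(#|F|, #|[set: E]|) :=
  \matrix_(i, j) (enum_val j == enum_val i :> E)%:R.

Let sum_delta (G : E -> rat) e : \sum_f (f == e)%:R * G f = G e.
Proof.
rewrite (bigD1 e) //= eqxx mul1r big1 ?addr0 // => f /negbTE ->.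
by rewrite mul0r.
Qed.

Let sum_enum_setT (G : E -> rat) :
  \sum_(i < #|[set: E]|) G (enum_val i) = \sum_e G e.
Proof. by rewrite -big_enum_val; apply: eq_bigl => e; rewrite inE. Qed.

Lemma edge_incl_mx_boundary F :
  edge_incl_mx F *m boundary_mx ends [set: E] = boundary_mx ends F.
Proof.
apply/matrixP => i v; rewrite !mxE; under eq_bigr do rewrite !mxE.
by rewrite (sum_enum_setT
  (fun e => (e == enum_val i :> E)%:R * incidence e (enum_val v))) sum_delta.
Qed.

Lemma edge_incl_mx_out (F : {set E}) (a : 'rV[rat]_#|F|) (j : 'I_#|[set: E]|) :
  enum_val j \notin F -> (a *m edge_incl_mx F) 0 j = 0.
Proof.
move=> jF; rewrite mxE big1 // => i _; rewrite mxE.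
by case: eqP => [ji|]; rewrite ?mulr0 //; move: jF; rewrite ji enum_valP.
Qed.

Lemma row_free_edge_incl_mx F : row_free (edge_incl_mx F).
Proof.
have inclK : edge_incl_mx F *m (edge_incl_mx F)^T = 1%:M.
  apply/matrixP => i i'; rewrite !mxE; under eq_bigr do rewrite !mxE.
  rewrite (sum_enum_setT
    (fun e => (e == enum_val i :> E)%:R * (e == enum_val i' :> E)%:R)).
  by rewrite sum_delta (inj_eq enum_val_inj) eq_sym.
rewrite /row_free eqn_leq rank_leq_row /=.
by apply: leq_trans (mxrankM_maxl _ (edge_incl_mx F)^T); rewrite inclK mxrank1.
Qed.

Definition induced_cycles F := kermx (boundary_mx ends F) *m edge_incl_mx F.

Lemma induced_cycles_sub F :
  (induced_cycles F <= kermx (boundary_mx ends [set: E]))%MS.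
Proof. by apply/sub_kermxP; rewrite -mulmxA edge_incl_mx_boundary mulmx_ker. Qed.

Lemma rank_induced_cycles F : \rank (induced_cycles F) = h1 ends F.
Proof. by rewrite mxrankMfree // row_free_edge_incl_mx. Qed.

Hypothesis h1_split : h1 ends [set: E] =
  (h1 ends (induced_edges ends V1) + h1 ends (induced_edges ends (~: V1)))%N.

Local Notation C1 := (induced_cycles (induced_edges ends V1)).
Local Notation C2 := (induced_cycles (induced_edges ends (~: V1))).

Lemma induced_cycles_disjoint : (C1 :&: C2)%MS = 0.
Proof.
apply/eqP; rewrite -submx0; apply/row_subP => i; rewrite submx0.
have := row_sub i (C1 :&: C2)%MS.
rewrite sub_capmx => /andP [/submxP [a1 a1E] /submxP [a2 a2E]].
apply/eqP/rowP => j; rewrite [RHS]mxE.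
have [jV1|jV2] : enum_val j \notin induced_edges ends V1 \/
                  enum_val j \notin induced_edges ends (~: V1).
  by rewrite !inE; case: ((ends (enum_val j)).1 \in V1); [right|left].
- by rewrite a1E mulmxA edge_incl_mx_out.
- by rewrite a2E mulmxA edge_incl_mx_out.
Qed.

Lemma cycle_space_split : (kermx (boundary_mx ends [set: E]) <= C1 + C2)%MS.
Proof.
have C12 : (C1 + C2 <= kermx (boundary_mx ends [set: E]))%MS.
  by rewrite addsmx_sub !induced_cycles_sub.
rewrite -(mxrank_leqif_sup C12) mxrank_disjoint_sum ?induced_cycles_disjoint //.
by rewrite !rank_induced_cycles -h1_split.
Qed.

Lemma cycle_crossing_eq0 (lam : E -> rat) :
  (forall v, \sum_e lam e * incidence e v = 0) -> forall e, crossing e -> lam e = 0.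
Proof.
move=> lam_cycle e e_cross.
set u : 'rV[rat]_#|[set: E]| := \row_i lam (enum_val i).
have u_cycle : (u <= kermx (boundary_mx ends [set: E]))%MS.
  apply/sub_kermxP/rowP => v; rewrite !mxE; under eq_bigr do rewrite !mxE.
  by rewrite (sum_enum_setT (fun e => lam e * incidence e (enum_val v))) lam_cycle.
have /sub_addsmxP [[a1 a2] /= uE] := submx_trans u_cycle cycle_space_split.
have eT : e \in [set: E] by rewrite inE.
have := congr1 (fun M : 'rV_ _ => M 0 (enum_rank_in eT e)) uE.
have [eV1 eV2] : e \notin induced_edges ends V1 /\ e \notin induced_edges ends (~: V1).
  by move: e_cross; rewrite /crossing !inE; do 2 case: (_ \in V1).
rewrite /u mxE enum_rankK_in // => ->.
by rewrite !mulmxA mxE !edge_incl_mx_out ?addr0 ?enum_rankK_in.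
Qed.

Definition joins (x y : V) (e : E) : bool := (ends e == (x, y)) || (ends e == (y, x)).

(* The difference of two parallel edges, suitably oriented, is a cycle. *)
Lemma crossing_parallel e f : crossing e -> joins (ends e).1 (ends e).2 f -> f = e.
Proof.
move=> e_cross ef; apply/eqP; apply: contraT => fe.
have e12 : (ends e).1 != (ends e).2 by apply: contraNneq e_cross => ->.
pose o : rat := if ends f == ends e then 1 else -1.
pose lam g : rat := (g == e)%:R - o * (g == f)%:R.
suff : lam e = 0.
  by rewrite /lam eqxx eq_sym (negbTE fe) mulr0 subr0 => /eqP; rewrite oner_eq0.
apply: cycle_crossing_eq0 e_cross => v.
under eq_bigr do rewrite /lam mulrBl -mulrA.
rewrite sumrB -mulr_sumr !sum_delta /o /incidence.
case/orP: ef => /eqP ->; first by rewrite -surjective_pairing eqxx mul1r subrr.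
have /negbTE -> : ((ends e).2, (ends e).1) != ends e.
  by move: e12; case: (ends e) => a b; rewrite xpair_eqE eq_sym => /negbTE ->.
by rewrite mulN1r opprB subrr.
Qed.

Lemma nedges_crossing_le1 x y : (x \in V1) != (y \in V1) -> (nedges ends x y <= 1)%N.
Proof.
move=> xy; rewrite leqNgt; apply/negP => /card_gt1P [e [f [+ + fe]]].
rewrite !inE => ex fx; apply/negP: fe; rewrite negbK.
have e_cross : crossing e by rewrite /crossing; case/orP: ex => /eqP -> //=; rewrite eq_sym.
rewrite eq_sym; apply/eqP; apply: (crossing_parallel e_cross).
by case/orP: ex => /eqP -> //=; rewrite /joins orbC.
Qed.

Section Walk.
Variables (s : {perm V}) (G : V -> E).
Hypothesis G_joins : forall y, s y != y -> joins y (s y) (G y).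

Definition orient (y : V) : rat := if ends (G y) == (y, s y) then 1 else -1.

(* The closed walk of [s] through the chosen edges [G y], as a 1-chain. *)
Definition walk_vector (f : E) : rat := \sum_(y | s y != y) (G y == f)%:R * orient y.

Lemma walk_vector_cycle v : \sum_e walk_vector e * incidence e v = 0.
Proof.
transitivity (\sum_(y | s y != y) ((v == s y)%:R - (v == y)%:R : rat)).
  under eq_bigr do rewrite /walk_vector mulr_suml.
  rewrite exchange_big /=; apply: eq_bigr => y sy.
  under eq_bigr do rewrite mulrAC eq_sym.
  rewrite -mulr_suml sum_delta /orient /incidence.
  case/orP: (G_joins sy) => /eqP ->; first by rewrite eqxx mulr1.
  by rewrite xpair_eqE (negbTE sy) /= mulrN1 opprB.
rewrite sumrB [X in _ - X](reindex_inj (@perm_inj _ s)) /=.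
by under [X in _ - X]eq_bigl => y do rewrite (inj_eq perm_inj); rewrite subrr.
Qed.

Let joins_same a b c d e : joins a b e -> joins c d e ->
  (c = a /\ d = b) \/ (c = b /\ d = a).
Proof.
by rewrite /joins => /orP [] /eqP -> /orP [] /eqP [-> ->]; [left|right|right|left].
Qed.

(* If [s (s x) != x], the crossing edge [G x] is used by the move of [x] only,
   so the walk has coefficient [orient x = ±1] on it. *)
Lemma walk_crossing_swap x : (x \in V1) != (s x \in V1) -> s (s x) = x.
Proof.
move=> x_cross; have sx : s x != x by apply: contraNneq x_cross => ->.
have Gx_cross : crossing (G x).
  by rewrite /crossing; case/orP: (G_joins sx) => /eqP -> //=; rewrite eq_sym.
apply/eqP; apply: contraT => ssx.
suff : walk_vector (G x) != 0.
  by rewrite (cycle_crossing_eq0 walk_vector_cycle Gx_cross) eqxx.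
rewrite /walk_vector (bigD1 x) //= eqxx mul1r big1 ?addr0.
  by rewrite /orient; case: ifP; rewrite ?oppr_eq0 oner_eq0.
move=> y /andP [sy yx]; case: eqP => [Gyx|]; last by rewrite mul0r.
have := G_joins sy; rewrite Gyx => /(joins_same (G_joins sx)).
by case=> [[yE _]|[yE syE]]; [move: yx; rewrite yE eqxx | move: ssx; rewrite -yE syE eqxx].
Qed.

End Walk.

Lemma crossing_perm_swap (s : {perm V}) :
  (forall y, s y != y -> (0 < nedges ends y (s y))%N) ->
  forall x, (x \in V1) != (s x \in V1) -> s (s x) = x.
Proof.
move=> s_edges x x_cross.
have sx : s x != x by apply: contraNneq x_cross => ->.
have /card_gt0P [e0 _] := s_edges x sx.
apply: (@walk_crossing_swap s (fun y => odflt e0 [pick e | joins y (s y) e])) => // y sy.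
case: pickP => [e //|none].
by have /card_gt0P [e] := s_edges y sy; rewrite inE -/(joins _ _ _) none.
Qed.

End CycleSpace.

Section DisjointTranspositions.
Variable V : finType.
Implicit Types (l : seq (V * V)) (p q : V * V).

Definition disjoint_pairs p q := [&& p.1 != q.1, p.1 != q.2, p.2 != q.1 & p.2 != q.2].

Definition covers l x := has (fun p => (x == p.1) || (x == p.2)) l.

Definition tperm_seq l : {perm V} := (\prod_(p <- l) tperm p.1 p.2)%g.

Lemma tperm_seq_out l x : ~~ covers l x -> tperm_seq l x = x.
Proof.
elim: l => [|p l IHl]; first by rewrite /tperm_seq big_nil perm1.
rewrite /covers /= !negb_or => /andP [/andP [xp1 xp2] /IHl lx].
by rewrite /tperm_seq big_cons permM tpermD 1?eq_sym.
Qed.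

Let not_covers_head q l x : all (disjoint_pairs q) l ->
  (x == q.1) || (x == q.2) -> ~~ covers l x.
Proof.
move=> /allP ql xq; rewrite /covers -all_predC; apply/allP => p /ql /and4P [? ? ? ?].
by case/orP: xq => /eqP ->; rewrite /= negb_or; apply/andP.
Qed.

Lemma tperm_seq_swap l : pairwise disjoint_pairs l ->
  forall p, p \in l -> tperm_seq l p.1 = p.2 /\ tperm_seq l p.2 = p.1.
Proof.
elim: l => [//|q l IHl]; rewrite pairwise_cons => /andP [ql pl] p.
rewrite /tperm_seq big_cons !permM -/(tperm_seq l) inE => /orP [/eqP ->|pl'].
  by rewrite tpermL tpermR !tperm_seq_out // (not_covers_head ql) ?eqxx ?orbT.
have [p1 p2] := IHl pl p pl'; have /and4P [? ? ? ?] := allP ql p pl'.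
by rewrite !tpermD // eq_sym.
Qed.

Lemma card_covers l : pairwise disjoint_pairs l -> all (fun p => p.1 != p.2) l ->
  #|[set x | covers l x]| = (2 * size l)%N.
Proof.
elim: l => [|q l IHl].
  by move=> _ _; apply/eqP; rewrite cards_eq0; apply/eqP/setP => x; rewrite !inE.
rewrite pairwise_cons => /andP [ql pl] /andP [q12 l12].
have -> : [set x | covers (q :: l) x] = q.1 |: (q.2 |: [set x | covers l x]).
  by apply/setP => x; rewrite !inE /covers /= orbA.
rewrite !cardsU1 IHl // !inE negb_or q12 !(not_covers_head ql) ?eqxx ?orbT //.
by rewrite mulnS.
Qed.

End DisjointTranspositions.

Section CrossMatching.
Variables (V E : finType) (ends : E -> V * V) (V1 : {set V}).
Implicit Type F : {set E}.

Local Notation crossing := (crossing ends V1).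

Lemma endpointsP F x : reflect (exists2 e, e \in F & x = (ends e).1 \/ x = (ends e).2)
                               (x \in endpoints ends F).
Proof.
rewrite inE; apply: (iffP existsP) => [[e /andP [eF /orP [] /eqP]]|[e eF [] ->]].
- by exists e => //; left.
- by exists e => //; right.
- by exists e; rewrite eF eqxx.
- by exists e; rewrite eF eqxx orbT.
Qed.

Lemma ends_endpoints F e : e \in F ->
  (ends e).1 \in endpoints ends F /\ (ends e).2 \in endpoints ends F.
Proof. by move=> eF; split; apply/endpointsP; exists e => //; [left|right]. Qed.

Lemma endpoints0 : endpoints ends set0 = set0.
Proof. by apply/setP => x; rewrite in_set0; apply/negP => /endpointsP [e]; rewrite inE. Qed.

Lemma cross_matching0 : cross_matching ends V1 set0.
Proof. by apply/andP; split; apply/forallP => e; rewrite inE. Qed.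

Lemma cross_matching_crossing F e : cross_matching ends V1 F -> e \in F -> crossing e.
Proof.
case/andP => /forallP /(_ e) + _ eF; rewrite eF /crossing.
by case/orP => /andP [-> /negbTE ->].
Qed.

Lemma cross_matching_disjoint F e f : cross_matching ends V1 F ->
  e \in F -> f \in F -> e != f -> disjoint_pairs (ends e) (ends f).
Proof.
case/andP => _ /forallP /(_ e) + eF fF ef.
by move=> /implyP/(_ eF)/forallP/(_ f); rewrite fF ef.
Qed.

Lemma cross_matching_perm F : cross_matching ends V1 F -> exists tau : {perm V},
  [/\ forall x, x \notin endpoints ends F -> tau x = x,
      forall e, e \in F -> tau (ends e).1 = (ends e).2 /\ tau (ends e).2 = (ends e).1,
      odd_perm tau = odd #|F|
    & #|endpoints ends F| = (2 * #|F|)%N].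
Proof.
move=> FM; pose l := [seq ends e | e <- enum F].
have l_disj : pairwise (@disjoint_pairs V) l.
  rewrite pairwise_map; apply: (@sub_in_pairwise _ (mem F) [rel e f | e != f]).
  - by move=> e f eF fF /(cross_matching_disjoint FM eF fF).
  - by apply/allP => e; rewrite mem_enum.
  - by rewrite -uniq_pairwise enum_uniq.
have l_proper : all (fun p : V * V => p.1 != p.2) l.
  rewrite all_map; apply/allP => e; rewrite mem_enum => /(cross_matching_crossing FM).
  by apply: contraNneq => /= ->; rewrite /crossing eqxx.
have coversE : [set x | covers l x] = endpoints ends F.
  apply/setP => x; rewrite !inE /covers has_map.
  apply/hasP/existsP => [[e eF xe]|[e /andP [eF xe]]]; exists e => //.
  - by rewrite -mem_enum eF.
  - by rewrite mem_enum.
exists (tperm_seq l); split.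
- by move=> x; rewrite -coversE inE => /tperm_seq_out.
- by move=> e eF; apply: tperm_seq_swap => //; rewrite map_f ?mem_enum.
- by rewrite odd_perm_prod // size_map -cardE.
- by rewrite -coversE card_covers // size_map -cardE.
Qed.

End CrossMatching.

Section Expansion.
Variables (R : comNzRingType) (V E : finType) (n : V -> R) (ends : E -> V * V).
Variable V1 : {set V}.
Hypothesis h1_split : h1 ends [set: E] =
  (h1 ends (induced_edges ends V1) + h1 ends (induced_edges ends (~: V1)))%N.

Local Notation m := (graph_entry n ends).
Local Notation crossing := (crossing ends V1).
Local Notation joins := (joins ends).

Definition perm_weight (s : {perm V}) : R := (-1) ^+ s * \prod_x m x (s x).

Lemma perm_weight_edges s : perm_weight s != 0 ->
  forall y, s y != y -> (0 < nedges ends y (s y))%N.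
Proof.
move=> ws y sy; rewrite lt0n; apply: contraNneq ws => y0.
rewrite /perm_weight (bigD1 y) //= /graph_entry (eq_sym y) (negbTE sy) y0.
by rewrite oppr0 !mul0r mulr0.
Qed.

Definition swapped (s : {perm V}) : {set E} :=
  [set e | crossing e && (s (ends e).1 == (ends e).2) && (s (ends e).2 == (ends e).1)].

Lemma swappedP (s : {perm V}) e :
  reflect [/\ crossing e, s (ends e).1 = (ends e).2 & s (ends e).2 = (ends e).1]
          (e \in swapped s).
Proof. by rewrite inE -andbA; apply: (iffP and3P) => -[? /eqP ? /eqP ?]. Qed.

Lemma cross_matching_swapped (s : {perm V}) : cross_matching ends V1 (swapped s).
Proof.
apply/andP; split; apply/forallP => e; apply/implyP => /swappedP [e_cross se1 se2].
  by move: e_cross; rewrite /crossing; do 2 case: (_ \in V1).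
apply/forallP => f; apply/implyP => /swappedP [f_cross sf1 sf2].
apply/implyP; apply: contraR => meet; apply/eqP/esym/(crossing_parallel h1_split e_cross).
rewrite /joins [ends f]surjective_pairing !xpair_eqE; move: meet; rewrite !negb_and !negbK.
case/or4P => /eqP ef; apply/orP.
- by left; rewrite -sf1 -ef se1 !eqxx.
- by right; rewrite -sf2 -ef se1 !eqxx.
- by right; rewrite -sf1 -ef se2 !eqxx.
- by left; rewrite -sf2 -ef se2 !eqxx.
Qed.

Section Fiber.
Variables (F : {set E}) (tau : {perm V}).
Hypothesis F_matching : cross_matching ends V1 F.
Local Notation U := (endpoints ends F).
Hypothesis tau_out : forall x, x \notin U -> tau x = x.
Hypothesis tau_swap : forall e, e \in F ->
  tau (ends e).1 = (ends e).2 /\ tau (ends e).2 = (ends e).1.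
Hypothesis odd_tau : odd_perm tau = odd #|F|.
Hypothesis card_U : #|U| = (2 * #|F|)%N.

Let A := V1 :\: U.
Let B := ~: V1 :\: U.

Let tau_joins x : x \in U -> exists2 e, e \in F & joins x (tau x) e.
Proof.
case/endpointsP => e eF xe; exists e => //; have [tau1 tau2] := tau_swap eF.
by case: xe => ->; rewrite /joins ?tau1 ?tau2 -surjective_pairing eqxx ?orbT.
Qed.

Let tau_endpoints x : x \in U -> tau x \in U.
Proof.
case/endpointsP => e eF xe; have [tau1 tau2] := tau_swap eF.
have [e1U e2U] := ends_endpoints ends eF.
by case: xe => ->; rewrite ?tau1 ?tau2.
Qed.

Let tauK : involutive tau.
Proof.
move=> x; case: (boolP (x \in U)) => [/endpointsP [e eF] | xU]; last by rewrite !tau_out.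
by have [tau1 tau2] := tau_swap eF; case=> ->; rewrite ?tau1 ?tau2.
Qed.

Let mem_AB x : (x \in A :|: B) = (x \notin U).
Proof. by rewrite /A /B in_setU !in_setD in_setC; case: (x \in U); case: (x \in V1). Qed.

Let disjoint_AB : [disjoint A & B].
Proof.
rewrite -setI_eq0; apply/eqP/setP => x; rewrite /A /B !inE.
by case: (x \in V1); rewrite ?andbF.
Qed.

Lemma swapped_fiber s : perm_weight s != 0 -> swapped s = F ->
  perm_on (A :|: B) (tau * s)%g && ((tau * s)%g \in 'N(A | 'P))%g.
Proof.
move=> ws sF; have s_edges := perm_weight_edges ws.
have s_swap e : e \in F -> s (ends e).1 = (ends e).2 /\ s (ends e).2 = (ends e).1.
  by rewrite -sF => /swappedP [].
have fixU x : x \in U -> (tau * s)%g x = x.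
  case/tau_joins => e eF /orP [] /eqP eE; have [] := s_swap e eF;
  by rewrite permM eE /= => s1 s2; rewrite ?s1 ?s2.
have sU x : x \notin U -> s x \notin U.
  move=> xU; apply/negP => /endpointsP [e eF sxe]; have [s1 s2] := s_swap e eF.
  apply: (negP xU); apply/endpointsP; exists e => //.
  by case: sxe => sxe; [right | left]; apply: (@perm_inj _ s); rewrite ?s1 ?s2.
have side x : x \notin U -> (s x \in V1) = (x \in V1).
  move=> xU; apply/eqP; apply: contraNT xU => x_cross.
  rewrite eq_sym in x_cross; have ssx := crossing_perm_swap h1_split s_edges x_cross.
  have sx : s x != x by apply: contraNneq x_cross => ->.
  have /card_gt0P [e] := s_edges x sx; rewrite inE => ex.
  have eF : e \in F.
    rewrite -sF; apply/swappedP; rewrite /crossing.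
    by case/orP: ex => /eqP -> /=; rewrite ?ssx // eq_sym.
  by apply/endpointsP; exists e => //; case/orP: ex => /eqP -> /=; [left | right].
apply/andP; split.
  apply/subsetP => x; rewrite inE mem_AB; apply: contraNN => xU.
  by rewrite fixU.
apply/astabsP => x /=; case: (boolP (x \in U)) => xU; first by rewrite apermE fixU.
by rewrite apermE permM tau_out // /A !in_setD side // (negbTE (sU x xU)) (negbTE xU).
Qed.

Lemma fiber_swapped s : perm_on (A :|: B) (tau * s)%g -> ((tau * s)%g \in 'N(A | 'P))%g ->
  swapped s = F.
Proof.
move=> r_on r_A.
have fixU x : x \in U -> (tau * s)%g x = x.
  by move=> xU; rewrite (out_perm r_on) // mem_AB xU.
have sU x : x \in U -> s x = tau x.
  by move=> xU; rewrite -[in LHS](tauK x) -permM fixU // tau_endpoints.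
apply/setP => e; apply/idP/idP => [/swappedP [e_cross se1 se2] | eF]; last first.
  have [t1 t2] := tau_swap eF; have [u1 u2] := ends_endpoints ends eF.
  by apply/swappedP; rewrite !sU // t1 t2 (cross_matching_crossing F_matching eF).
case: (boolP ((ends e).1 \in U)) => e1U.
  have [f fF fe] := tau_joins e1U; rewrite -(sU _ e1U) se1 in fe.
  by rewrite -(crossing_parallel h1_split e_cross fe).
case: (boolP ((ends e).2 \in U)) => e2U.
  by move: e1U; rewrite -se2 sU // (tau_endpoints e2U).
have : ((tau * s)%g (ends e).1 \in A) = ((ends e).1 \in A) by move/astabsP: r_A; apply.
rewrite permM tau_out // se1 /A !in_setD (negbTE e1U) (negbTE e2U) /= => e12.
by move: e_cross; rewrite /crossing e12 eqxx.
Qed.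

Lemma graph_entry_tau x : x \in U -> m x (tau x) = -1.
Proof.
case/tau_joins => e eF ex; have e_cross := cross_matching_crossing F_matching eF.
have x_cross : (x \in V1) != (tau x \in V1).
  by move: e_cross; rewrite /crossing; case/orP: ex => /eqP -> //=; rewrite eq_sym.
have := nedges_crossing_le1 h1_split x_cross.
rewrite leq_eqVlt ltnS leqn0 => /orP [/eqP n1|].
  have xtx : x != tau x by apply: contraNneq x_cross => <-.
  by rewrite /graph_entry n1 (negbTE xtx).
by rewrite cards_eq0 => /eqP/setP/(_ e); rewrite !inE -/(joins _ _ _) ex.
Qed.

(* Each of the [2 #|F|] vertices [x] of [U] contributes the entry [-1] of the
   unique crossing edge joining [x] and [tau x]. *)
Lemma perm_weight_tau r : perm_on (A :|: B) r ->
  perm_weight (tau * r)%g = (-1) ^+ #|F| * ((-1) ^+ r * \prod_(x in A :|: B) m x (r x)).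
Proof.
move=> r_on; rewrite /perm_weight odd_permM signr_addb odd_tau signr_odd -mulrA.
congr (_ * (_ * _)); rewrite (bigID (mem U)) /=.
rewrite (eq_bigr (fun _ => -1)) => [|x xU]; last first.
  by rewrite permM (out_perm r_on) ?graph_entry_tau // mem_AB negbK tau_endpoints.
rewrite prodr_const card_U -signr_odd oddM mul1r.
by apply: eq_big => [x|x xU]; rewrite ?mem_AB // permM tau_out.
Qed.

Lemma sum_swapped_eq :
  \sum_(s | swapped s == F) perm_weight s = (-1) ^+ #|F| * (det_on m A * det_on m B).
Proof.
transitivity (\sum_(s | perm_on (A :|: B) (tau * s)%g && ((tau * s)%g \in 'N(A | 'P))%g)
                perm_weight s).
  rewrite big_mkcond [RHS]big_mkcond; apply: eq_bigr => s _.
  have [->|ws] := eqVneq (perm_weight s) 0; first by rewrite !if_same.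
  case: ifP => [/eqP /(swapped_fiber ws) -> //|]; case: ifP => // /andP [r_on r_A].
  by rewrite fiber_swapped ?eqxx.
have tau2 : (tau * tau)%g = 1%g by apply/permP => x; rewrite permM tauK perm1.
rewrite (reindex_inj (mulgI tau)) /=.
under eq_bigl do rewrite mulgA tau2 mul1g.
rewrite -det_on_disjointU ?disjoint_AB // mulr_sumr.
by apply: eq_bigr => r /andP [r_on _]; rewrite perm_weight_tau.
Qed.

End Fiber.

Lemma gdet_expansion : gdet n ends [set: V] =
  \sum_(F | cross_matching ends V1 F) (-1) ^+ #|F| *
    (gdet n ends (V1 :\: endpoints ends F) * gdet n ends (~: V1 :\: endpoints ends F)).
Proof.
rewrite gdet_det_on /det_on.
transitivity (\sum_s perm_weight s).
  apply: eq_big => [s|s _]; first by apply/subsetP => x; rewrite inE.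
  by rewrite /perm_weight; congr (_ * _); apply: eq_bigl => x; rewrite inE.
rewrite (partition_big swapped (cross_matching ends V1)) => [|s _]; last first.
  exact: cross_matching_swapped.
apply: eq_bigr => F FM.
have [tau [tau_out tau_swap odd_tau card_U]] := cross_matching_perm FM.
by rewrite (sum_swapped_eq FM tau_out tau_swap odd_tau card_U) !gdet_det_on.
Qed.

End Expansion.

Theorem lemma2p4 (R : realFieldType) (V E : finType) (n : V -> R)
    (ends : E -> V * V) (V1 V2 : {set V})
    (noloop : forall e : E, (ends e).1 != (ends e).2)
    (hpart : V2 = ~: V1)
    (hh1 : h1 ends [set: E] =
           (h1 ends (induced_edges ends V1) + h1 ends (induced_edges ends V2))%N) :
  gdet n ends [set: V] =
    gdet n ends V1 * gdet n ends V2
    + \sum_(F : {set E} | cross_matching ends V1 F && (0 < #|F|)%N)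
        (-1) ^+ #|F| * gdet n ends (V1 :\: endpoints ends F)
                     * gdet n ends (V2 :\: endpoints ends F).
Proof.
subst V2; rewrite (gdet_expansion n hh1) (bigD1 set0) ?cross_matching0 //=.
rewrite endpoints0 cards0 expr0 mul1r !setD0; congr (_ + _).
by apply: eq_big => [F|F _]; rewrite ?card_gt0 ?mulrA.
Qed.
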